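(* Let $T(n) = (3n+1)/2^{v_2(3n+1)}$ for odd $n \ge 1$. For an odd positive integer $n \equiv 1 \pmod 4$, say that $n$ produces $(L,G) = (1,1)$ if $T(n) \equiv 3 \pmod 4$ and $T(T(n)) \equiv 1 \pmod 4$. For $n_0 = 64a + r$ with integer $a \ge 0$ and $r \in \{5,13,21,29,37,45,53,61\}$: (a) if $r = 29$, then $n_0$ produces $(L,G)=(1,1)$ for every $a$; (b) if $r = 21$, then $n_0$ produces $(L,G)=(1,1)$ if and only if $\mathrm{oddpart}(3a+1) \equiv 3 \pmod 8$; (c) if $r = 37$, then $n_0$ produces $(L,G)=(1,1)$ if and only if $a$ is odd; (d) if $r = 53$, then $n_0$ produces $(L,G)=(1,1)$ if and only if $a \equiv 1 \pmod 4$; (e) if $r \in \{5,13,45,61\}$, then $n_0$ does not produce $(L,G)=(1,1)$ for any $a$.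
   Context: $v_2$ is the $2$-adic valuation and $\mathrm{oddpart}(x) = x/2^{v_2(x)}$ for a positive integer $x$. In terms of the orbit $n_0, T(n_0), T^2(n_0),\dots$ with burst indicator $X_t = \mathbf{1}[n_t\equiv 1 \pmod 4]$, $(L,G)=(1,1)$ means the burst run starting at $n_0$ has length $L=1$ and the following gap run has length $G=1$. *)

From mathcomp Require Import all_boot.

Definition v2 (x : nat) : nat := logn 2 x.

Definition oddpart (x : nat) : nat := x %/ 2 ^ v2 x.

Definition T (n : nat) : nat := oddpart (3 * n + 1).

Definition produces11 (n : nat) : Prop :=
  T n %% 4 = 3 /\ T (T n) %% 4 = 1.

From mathcomp Require Import all_boot.
From mathcomp Require Import zify.

(* Since T (4q+3) = 6q+5, an n produces (1,1) exactly when T n = 3 mod 8.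
   For n = 64a + r, 3n + 1 is 2^k times an explicit odd linear function of a
   (for r = 21 it is 2^6 (3a+1), whence the odd part of 3a+1), and reducing
   that value mod 8 gives each case. *)

Lemma oddpart_odd_id m : odd m -> oddpart m = m.
Proof.
move=> om; rewrite /oddpart (_ : v2 m = 0) ?divn1 //.
by apply/logn_coprime; rewrite coprime2n.
Qed.

Lemma oddpart_pow2M k x : 0 < x -> oddpart (2 ^ k * x) = oddpart x.
Proof.
move=> x_gt0; rewrite /oddpart /v2 lognM ?expn_gt0 // pfactorK //.
by rewrite expnD divnMl ?expn_gt0.
Qed.

Lemma T_pow2M n k x : 3 * n + 1 = 2 ^ k * x -> 0 < x -> T n = oddpart x.
Proof. by move=> e x_gt0; rewrite /T e oddpart_pow2M. Qed.

Lemma T_pow2M_odd n k m : 3 * n + 1 = 2 ^ k * m -> odd m -> T n = m.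
Proof.
move=> e om; rewrite (T_pow2M _ _ _ e) ?oddpart_odd_id //.
by case: m om {e}.
Qed.

Lemma T_4q3 q : T (4 * q + 3) = 6 * q + 5.
Proof. by apply: (@T_pow2M_odd _ 1); lia. Qed.

Lemma produces11E n : produces11 n <-> T n %% 8 = 3.
Proof.
rewrite /produces11; set t := T n.
have Tt : t %% 4 = 3 -> T t = 6 * (t %/ 4) + 5.
  by move=> t_mod4; rewrite {1}(divn_eq t 4) t_mod4 mulnC T_4q3.
by split=> [[t_mod4] | t_mod8]; rewrite Tt; lia.
Qed.

Theorem proposition5p1 :
  (forall a : nat, produces11 (64 * a + 29)) /\
  (forall a : nat, produces11 (64 * a + 21) <-> oddpart (3 * a + 1) %% 8 = 3) /\
  (forall a : nat, produces11 (64 * a + 37) <-> odd a) /\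
  (forall a : nat, produces11 (64 * a + 53) <-> a %% 4 = 1) /\
  (forall a r : nat, r \in [:: 5; 13; 45; 61] -> ~ produces11 (64 * a + r)).
Proof.
split; [|split; [|split; [|split]]] => a; rewrite ?produces11E.
- by rewrite (@T_pow2M_odd _ 3 (24 * a + 11)); lia.
- by rewrite (@T_pow2M _ 6 (3 * a + 1)); lia.
- by rewrite (@T_pow2M_odd _ 4 (12 * a + 7)); lia.
- by rewrite (@T_pow2M_odd _ 5 (6 * a + 5)); lia.
move=> r; rewrite !inE produces11E => /or4P [] /eqP ->.
- by rewrite (@T_pow2M_odd _ 4 (12 * a + 1)); lia.
- by rewrite (@T_pow2M_odd _ 3 (24 * a + 5)); lia.
- by rewrite (@T_pow2M_odd _ 3 (24 * a + 17)); lia.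
- by rewrite (@T_pow2M_odd _ 3 (24 * a + 23)); lia.
Qed.
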